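(* Let $1\le j\le d$ and let $\bm{x}_1,\dots,\bm{x}_{j+1}\in\mathbb{R}^d$ be affinely independent points (the vertices of a nondegenerate $j$-simplex). Let $d_{st}^2=\|\bm{x}_s-\bm{x}_t\|^2$, and let $\hat{B}$ be the $(j+2)\times(j+2)$ Cayley–Menger matrix $$\hat{B}=\begin{bmatrix}0 & 1 & 1 & \cdots & 1\\ 1 & 0 & d_{12}^2 & \cdots & d_{1,j+1}^2\\ 1 & d_{21}^2 & 0 & \cdots & d_{2,j+1}^2\\ \vdots & \vdots & \vdots & \ddots & \vdots\\ 1 & d_{j+1,1}^2 & d_{j+1,2}^2 & \cdots & 0\end{bmatrix}.$$ Let $\gamma=j!\,C$, where $C=\sqrt{\frac{(-1)^{j+1}}{2^j (j!)^2}\det(\hat{B})}$ is the $j$-dimensional content of the simplex. Then for each $p\in\{1,\dots,j+1\}$, $$\frac{\partial \gamma}{\partial \bm{x}_p}=\frac{(-1)^{j+1}/2^j}{\gamma}\sum_{\substack{m=1\\ m\neq p}}^{j+1}A_{pm}\,\bm{D}_{pm},$$ where $\bm{D}_{pm}=2(\bm{x}_p-\bm{x}_m)$ and $A_{pm}$ is the entry in the $(p+1)$-th row and $(m+1)$-th column of the adjugate matrix $\mathrm{adj}(\hat{B})$.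
   Context: $\gamma$ is called the content distortion factor: the ratio of the content (volume) of the $j$-simplex to the content $1/j!$ of the unit orthogonal $j$-simplex. Rows and columns of $\hat B$ are indexed $1,\dots,j+2$, with the first row/column being the border of ones, and row/column $s+1$ corresponding to vertex $\bm{x}_s$. The derivative with respect to $\bm{x}_p\in\mathbb{R}^d$ is the gradient vector in $\mathbb{R}^d$. *)

From HB Require Import structures.
From mathcomp Require Import all_boot all_order all_algebra.
From mathcomp Require Import all_classical all_reals all_analysis.
Set Implicit Arguments. Unset Strict Implicit. Unset Printing Implicit Defensive.
Import Order.TTheory GRing.Theory Num.Theory.
Import numFieldNormedType.Exports.
Local Open Scope ring_scope.

(* Points x_1..x_{j+1} in R^d are x : 'I_j.+1 -> 'rV[R]_d (0-based indices). *)

Definition sqdist (R : realType) (d n : nat) (x : 'I_n -> 'rV[R]_d) (s t : 'I_n) : R :=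
  \sum_(k < d) (x s 0 k - x t 0 k) ^+ 2.

Definition affinely_independent (R : realType) (d j : nat) (x : 'I_j.+1 -> 'rV[R]_d) : bool :=
  row_free (\matrix_(i < j) (x (lift ord0 i) - x ord0)).

(* Cayley-Menger matrix (size j+2): index 0 is the border, index (lift ord0 s)
   corresponds to vertex x_s. *)
Definition cm_matrix (R : realType) (d j : nat) (x : 'I_j.+1 -> 'rV[R]_d) : 'M[R]_j.+2 :=
  \matrix_(a, b)
    match unlift ord0 a, unlift ord0 b with
    | Some s, Some t => sqdist x s t
    | None, None => 0
    | _, _ => 1
    end.

Definition content (R : realType) (d j : nat) (x : 'I_j.+1 -> 'rV[R]_d) : R :=
  Num.sqrt ((-1) ^+ j.+1 / (2 ^+ j * (j`!)%:R ^+ 2) * \det (cm_matrix x)).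

Definition gamma_cdf (R : realType) (d j : nat) (x : 'I_j.+1 -> 'rV[R]_d) : R :=
  (j`!)%:R * content x.

Definition upd_vertex (R : realType) (d n : nat) (x : 'I_n -> 'rV[R]_d) (p : 'I_n)
  (y : 'rV[R]_d) : 'I_n -> 'rV[R]_d :=
  fun s => if s == p then y else x s.

From Pilot Require Import Defs.
From HB Require Import structures.
From mathcomp Require Import all_boot all_order all_algebra.
From mathcomp Require Import all_classical all_reals all_analysis.
From mathcomp Require Import perm ring.
Set Implicit Arguments. Unset Strict Implicit. Unset Printing Implicit Defensive.
Import Order.TTheory GRing.Theory Num.Theory.
Import numFieldNormedType.Exports.
Local Open Scope ring_scope.

(* By Jacobi's formula the differential of det B is the sum of
   cofactor(B)_ab * dB_ab.  Moving x_p only changes the entries d_pm^2 and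
   d_mp^2, whose differentials in direction v are +-D_pm.v, and B is symmetric,
   so d(det B) v = 2 sum_m adj(B)_pm D_pm.v; the chain rule through
   gamma = sqrt((-1)^(j+1) det B / 2^j) gives the formula.  The square root is
   differentiable because its argument is positive: a unitriangular congruence
   reduces det B to (-1)^(j+1) 2^j times the Gram determinant of the edges
   x_s - x_1, and a positive definite matrix has positive determinant, since
   the determinant cannot vanish on the segment joining it to the identity. *)

Lemma mulmx_trmx_gt0 (R : realDomainType) n (w : 'rV[R]_n) :
  w != 0 -> 0 < (w *m w^T) 0 0.
Proof.
move=> w_neq0; rewrite mxE.
under eq_bigr do rewrite mxE -expr2.
rewrite lt_def sumr_ge0 ?andbT => [|k _]; last exact: sqr_ge0.
apply/negP => /eqP/psumr_eq0P sum0; move/negP: w_neq0; apply.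
apply/eqP/rowP => k; rewrite mxE; apply/eqP; rewrite -sqrf_eq0.
by rewrite sum0 // => i _; exact: sqr_ge0.
Qed.

Definition posdefmx (R : realDomainType) n (A : 'M[R]_n) :=
  forall w : 'rV[R]_n, w != 0 -> 0 < (w *m A *m w^T) 0 0.

Lemma posdefmx1 (R : realDomainType) n : posdefmx (1%:M : 'M[R]_n).
Proof. by move=> w; rewrite mulmx1; exact: mulmx_trmx_gt0. Qed.

Lemma posdefmx_gram (R : realFieldType) m n (V : 'M[R]_(m, n)) :
  row_free V -> posdefmx (V *m V^T).
Proof.
move=> freeV w w_neq0.
have -> : w *m (V *m V^T) *m w^T = (w *m V) *m (w *m V)^T.
  by rewrite trmx_mul !mulmxA.
by apply: mulmx_trmx_gt0; rewrite mulmx_free_eq0.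
Qed.

Lemma posdefmx_segment (R : realDomainType) n (A B : 'M[R]_n) t :
  posdefmx A -> posdefmx B -> 0 <= t <= 1 -> posdefmx (A + t *: (B - A)).
Proof.
move=> posA posB /andP[t_ge0 t_le1] w w_neq0.
have -> : (w *m (A + t *: (B - A)) *m w^T) 0 0 =
    (1 - t) * (w *m A *m w^T) 0 0 + t * (w *m B *m w^T) 0 0.
  rewrite mulmxDr mulmxDl -scalemxAr -scalemxAl mulmxBr mulmxBl !mxE; ring.
have qA := posA w w_neq0; have qB := posB w w_neq0.
have [->|t_neq0] := eqVneq t 0; first by rewrite subr0 mul1r mul0r addr0.
rewrite ltr_wpDl ?mulr_ge0 ?subr_ge0 ?(ltW qA) // mulr_gt0 //.
by rewrite lt_def t_neq0.
Qed.

Lemma posdefmx_det_neq0 (R : realFieldType) n (A : 'M[R]_n) :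
  posdefmx A -> \det A != 0.
Proof.
move=> posA; apply/negP => /det0P[w w_neq0 wA0].
by have := posA w w_neq0; rewrite wA0 mul0mx mxE ltxx.
Qed.

Lemma det_gt0_segment (R : rcfType) n (A B : 'M[R]_n) :
  0 < \det A -> (forall t, 0 <= t <= 1 -> \det (A + t *: (B - A)) != 0) ->
  0 < \det B.
Proof.
move=> detA_gt0 path_neq0; rewrite ltNge; apply/negP => detB_le0.
pose P : {poly R} := \det (\matrix_(a, b) ((A a b)%:P + 'X * (B a b - A a b)%:P)).
have PE t : P.[t] = \det (A + t *: (B - A)).
  rewrite -horner_evalE -det_map_mx; congr (\det _); apply/matrixP => a b.
  by rewrite !mxE rmorphD rmorphM /= !horner_evalE hornerX !hornerC.
have [|t t01] := @poly_ivt R (- P) 0 1 ler01.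
  rewrite !hornerN !PE scale0r addr0 scale1r addrC subrK.
  by rewrite oppr_le0 oppr_ge0 detB_le0 ltW.
by rewrite rootN /root PE (negPf (path_neq0 t t01)).
Qed.

Lemma posdefmx_det_gt0 (R : rcfType) n (A : 'M[R]_n) : posdefmx A -> 0 < \det A.
Proof.
move=> posA; apply: (@det_gt0_segment _ _ 1%:M); first by rewrite det1.
by move=> t t01; apply/posdefmx_det_neq0/posdefmx_segment => //; exact: posdefmx1.
Qed.

Lemma det_shear (R : comRingType) n (a : 'cV[R]_n.+1) :
  a ord0 0 = 0 -> \det (1%:M - a *m delta_mx 0 ord0) = 1.
Proof.
move=> a00; rewrite det_trig.
  rewrite big1 // => i _; rewrite !mxE big_ord1 !mxE eqxx.
  by case: (i =P ord0) => [->|_]; rewrite ?a00 ?andbF ?mulr0 ?mul0r subr0.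
apply/forallP => i; apply/forallP => k; apply/implyP => lt_ik.
have [ik k0] : i != k /\ k != ord0.
  by rewrite !neq_ltn lt_ik (leq_ltn_trans _ lt_ik) ?orbT.
by rewrite !mxE big_ord1 !mxE (negPf ik) (negPf k0) andbF mulr0 subr0.
Qed.

Lemma shear_congr_entry (R : comRingType) n (A : 'M[R]_n.+1) (a : 'cV[R]_n.+1)
    i k :
  ((1%:M - a *m delta_mx 0 ord0) *m A *m (1%:M - a *m delta_mx 0 ord0)^T) i k =
  A i k - a i 0 * A ord0 k - (A i ord0 - a i 0 * A ord0 ord0) * a k 0.
Proof.
rewrite mulmxBl mul1mx -mulmxA -rowE linearB /= trmx1 trmx_mul trmx_delta.
rewrite mulmxBr mulmx1 mulmxA -colE.
by rewrite !mxE !big_ord1 !mxE !big_ord1 !mxE.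
Qed.

Lemma det_cm_reduced (R : comRingType) j (N : 'M[R]_j.+2) (G : 'M[R]_j) :
  N ord0 (lift ord0 ord0) = 1 -> N (lift ord0 ord0) ord0 = 1 ->
  (forall t, N (lift ord0 ord0) (lift ord0 t) = 0) ->
  (forall s, N (lift ord0 (lift ord0 s)) (lift ord0 ord0) = 0) ->
  (forall s t, N (lift ord0 (lift ord0 s)) (lift ord0 (lift ord0 t)) = G s t) ->
  \det N = - \det G.
Proof.
move=> N01 N10 N1l Nl1 Nll.
have lift10 : lift (lift ord0 ord0) ord0 = ord0 :> 'I_j.+2 by apply: val_inj.
have lift1l s : lift (lift ord0 ord0) (lift ord0 s) = lift ord0 (lift ord0 s) :> 'I_j.+2.
  exact: val_inj.
rewrite (expand_det_row _ (lift ord0 ord0)) big_ord_recl big1 => [|t _]; last first.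
  by rewrite N1l mul0r.
rewrite N10 mul1r addr0 /cofactor (expand_det_col _ ord0) big_ord_recl big1 => [|s _].
  rewrite !mxE lift10 N01 mul1r addr0 /cofactor expr0 mul1r expr1 mulN1r.
  by congr (- \det _); apply/matrixP => s t; rewrite !mxE lift1l Nll.
by rewrite !mxE lift1l Nl1 mul0r.
Qed.

Lemma big_delta_antisym (R : comRingType) n (p : 'I_n) (S C : 'I_n -> 'I_n -> R) :
  (forall s t, S t s = - S s t) -> (forall s t, C t s = C s t) ->
  \sum_s \sum_t ((s == p)%:R - (t == p)%:R) * S s t * C s t =
  2 * \sum_m C p m * S p m.
Proof.
move=> S_anti C_sym.
have pick (F : 'I_n -> R) : \sum_i (i == p)%:R * F i = F p.
  by rewrite (bigD1 p) //= eqxx mul1r big1 ?addr0 // => i /negPf->; rewrite mul0r.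
under eq_bigr => s _ do under eq_bigr => t _ do rewrite mulrBl mulrBl -!mulrA.
under eq_bigr => s _ do rewrite sumrB -mulr_sumr pick.
rewrite sumrB pick.
under [X in _ - X]eq_bigr => s _ do rewrite S_anti C_sym mulNr.
rewrite sumrN opprK -big_split mulr_sumr /=.
by apply: eq_bigr => m _; rewrite mulrC mulr2n mulrDl mul1r.
Qed.

Section DifferentialRules.
Variables (R : numFieldType) (V : normedModType R).

Lemma is_diff_sum (W : normedModType R) (I : Type) (r : seq I)
    (F dF : I -> V -> W) a :
  (forall i, is_diff a (F i) (dF i)) ->
  is_diff a (fun y => \sum_(i <- r) F i y) (fun v => \sum_(i <- r) dF i v).
Proof.
move=> dF_F; elim: r => [|i r IH].
  rewrite (_ : (fun y => _) = cst 0); last by apply/funext => y; rewrite big_nil.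
  by apply: (is_diff_eq (is_diff_cst (0 : W) a)); apply/funext => v; rewrite big_nil.
rewrite (_ : (fun y => _) = F i + fun y => \sum_(i <- r) F i y); last first.
  by apply/funext => y; rewrite big_cons.
by apply: (is_diff_eq (is_diffD (dF_F i) IH)); apply/funext => v; rewrite big_cons.
Qed.

Lemma is_diff_sqr (f df : V -> R) a :
  is_diff a f df -> is_diff a (fun y => f y ^+ 2) (fun v => 2 * f a * df v).
Proof.
move=> df_f; rewrite (_ : (fun y => _) = f * f); last first.
  by apply/funext => y; rewrite expr2.
apply: (is_diff_eq (is_diffM df_f df_f)); apply/funext => v.
by rewrite !fctE /GRing.scale /=; ring.
Qed.

Lemma is_diff_prod n (F dF : 'I_n -> V -> R) a :
  (forall i, is_diff a (F i) (dF i)) ->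
  is_diff a (fun y => \prod_i F i y)
    (fun v => \sum_i (\prod_(k | k != i) F k a) * dF i v).
Proof.
elim: n F dF => [|n IH] F dF dF_F.
  rewrite (_ : (fun y => _) = cst 1); last by apply/funext => y; rewrite big_ord0.
  by apply: (is_diff_eq (is_diff_cst (1 : R) a)); apply/funext => v; rewrite big_ord0.
pose G y := \prod_(i < n) F (lift ord0 i) y.
rewrite (_ : (fun y => _) = F ord0 * G); last first.
  by apply/funext => y; rewrite big_ord_recl.
apply: (is_diff_eq (is_diffM (dF_F ord0) (IH _ _ (fun i => dF_F (lift ord0 i))))).
apply/funext => v; rewrite big_ord_recl /= [in RHS]big_mkcond [in RHS]big_ord_recl /=.
rewrite mul1r !fctE addrC /GRing.scale /=; congr (_ + _).
rewrite mulr_sumr; apply: eq_bigr => i _.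
rewrite [in RHS]big_mkcond big_ord_recl /= mulrA; congr (_ * _ * _).
by rewrite big_mkcond; apply: eq_bigr => k _; rewrite (inj_eq (@lift_inj _ ord0)).
Qed.

Lemma is_diff_det n (M : V -> 'M[R]_n) (dM : 'I_n -> 'I_n -> V -> R) a :
  (forall i k, is_diff a (fun y => M y i k) (dM i k)) ->
  is_diff a (fun y => \det (M y))
    (fun v => \sum_i \sum_k dM i k v * cofactor (M a) i k).
Proof.
move=> dM_M.
have dterm (s : 'S_n) : is_diff a (fun y => (-1) ^+ s * \prod_i M y i (s i))
    (fun v => (-1) ^+ s * \sum_i (\prod_(k | k != i) M a k (s k)) * dM i (s i) v).
  exact: (is_diffZ _ (is_diff_prod (fun i => dM_M i (s i)))).
apply: (is_diff_eq (is_diff_sum (index_enum _) dterm)); apply/funext => v.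
under eq_bigr => s _ do rewrite mulr_sumr.
rewrite exchange_big /=; apply: eq_bigr => i _.
under [RHS]eq_bigr => k _ do rewrite expand_cofactor mulr_sumr.
rewrite (partition_big (fun s : 'S_n => s i) predT) //=.
apply: eq_bigr => k _; apply: eq_big => [s|s /eqP <-] //.
rewrite [RHS]mulrC -mulrA; congr (_ * (_ * _)).
by apply: eq_bigl => l; rewrite eq_sym.
Qed.

End DifferentialRules.

Lemma is_diff_coord (R : numFieldType) m n (i : 'I_m) (k : 'I_n) (a : 'M[R]_(m, n)) :
  is_diff a (fun y : 'M[R]_(m, n) => y i k) (fun v => v i k).
Proof.
pose c := fun y : 'M[R]_(m, n) => y i k.
have c_linear : linear c by move=> r u v; rewrite /c !mxE.
pose f : {linear 'M[R]_(m, n) -> R} :=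
  HB.pack c (GRing.isLinear.Build _ _ _ _ _ c_linear).
have f_cont : continuous f by exact: coord_continuous.
rewrite -/c (_ : c = f) //.
by apply: DiffDef; [exact: linear_differentiable | exact: diff_lin].
Qed.

Lemma is_diff_sqrt (R : realType) (V : normedModType R) (g dg : V -> R) a :
  is_diff a g dg -> 0 < g a ->
  is_diff a (fun y => Num.sqrt (g y)) (fun v => dg v / (2 * Num.sqrt (g a))).
Proof.
move=> dg_g ga_gt0.
have sqrt_diff : is_diff (g a) (@Num.sqrt R) (fun h => h / (2 * Num.sqrt (g a))).
  have sqrt_der := is_derive1_sqrt ga_gt0.
  have sqrt_d : differentiable (@Num.sqrt R) (g a).
    by apply/derivable1_diffP; exact: ex_derive.
  apply: DiffDef => //; rewrite diff1E // derive1E derive_val.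
  by apply/funext => h.
exact: (is_diff_comp dg_g sqrt_diff).
Qed.

Section SquaredDistance.
Variables (R : realType) (d n : nat) (x : 'I_n -> 'rV[R]_d).

Lemma sqdistC s t : sqdist x s t = sqdist x t s.
Proof. by apply: eq_bigr => k _; rewrite -sqrrN opprB. Qed.

Lemma sqdistxx s : sqdist x s s = 0.
Proof. by rewrite /sqdist big1 // => k _; rewrite subrr expr0n. Qed.

Lemma sqdist_polar o s t :
  sqdist x s t = sqdist x s o + sqdist x t o - 2 * ((x s - x o) *m (x t - x o)^T) 0 0.
Proof.
rewrite /sqdist mxE mulr_sumr -big_split -sumrB /=.
by apply: eq_bigr => k _; rewrite !mxE; ring.
Qed.

End SquaredDistance.

Section CayleyMenger.
Variables (R : realType) (d j : nat) (x : 'I_j.+1 -> 'rV[R]_d).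
Local Notation B := (cm_matrix x).

Lemma cm_matrix00 : B ord0 ord0 = 0.
Proof. by rewrite mxE unlift_none. Qed.

Lemma cm_matrix0l t : B ord0 (lift ord0 t) = 1.
Proof. by rewrite mxE unlift_none liftK. Qed.

Lemma cm_matrixl0 s : B (lift ord0 s) ord0 = 1.
Proof. by rewrite mxE unlift_none liftK. Qed.

Lemma cm_matrixll s t : B (lift ord0 s) (lift ord0 t) = sqdist x s t.
Proof. by rewrite mxE !liftK. Qed.

Lemma trmx_cm_matrix : B^T = B.
Proof.
apply/matrixP => a b; rewrite !mxE.
by case: (unlift ord0 a) => [s|]; case: (unlift ord0 b) => [t|] //; rewrite sqdistC.
Qed.

Definition edge_mx : 'M[R]_(j, d) := \matrix_(i < j) (x (lift ord0 i) - x ord0).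

Lemma det_cm_matrix :
  \det B = (-1) ^+ j.+1 * 2 ^+ j * \det (edge_mx *m edge_mx^T).
Proof.
pose a : 'cV[R]_j.+2 :=
  \col_i (if unlift ord0 i is Some s then sqdist x s ord0 else 0).
have a0 : a ord0 0 = 0 by rewrite mxE unlift_none.
have al s : a (lift ord0 s) 0 = sqdist x s ord0 by rewrite mxE liftK.
pose L := 1%:M - a *m delta_mx 0 ord0.
have <- : \det (L *m B *m L^T) = \det B.
  by rewrite !det_mulmx det_tr det_shear // mul1r mulr1.
pose G s t := ((x s - x ord0) *m (x t - x ord0)^T) 0 0.
have G0l t : G ord0 t = 0 by rewrite /G subrr mul0mx mxE.
have Gl0 s : G s ord0 = 0 by rewrite /G subrr trmx0 mulmx0 mxE.
have Nll s t : (L *m B *m L^T) (lift ord0 s) (lift ord0 t) = -2 * G s t.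
  rewrite shear_congr_entry !al cm_matrixll cm_matrixl0 cm_matrix00 cm_matrix0l.
  by rewrite (sqdist_polar _ ord0) /G; ring.
rewrite (@det_cm_reduced _ _ (L *m B *m L^T) (-2 *: (edge_mx *m edge_mx^T))).
- by rewrite detZ [in LHS]exprNn -!mulNr exprS mulN1r.
- by rewrite shear_congr_entry a0 al cm_matrix0l cm_matrix00 !(mul0r, subr0).
- by rewrite shear_congr_entry a0 al cm_matrixl0 cm_matrix00 !(mulr0, subr0).
- by move=> t; rewrite Nll G0l mulr0.
- by move=> s; rewrite Nll Gl0 mulr0.
move=> s t; rewrite Nll /G !mxE; congr (_ * _).
by apply: eq_bigr => k _; rewrite !mxE.
Qed.

Lemma cm_content_sqr_gt0 : affinely_independent x ->
  0 < (-1) ^+ j.+1 / (2 ^+ j * (j`!)%:R ^+ 2) * \det B.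
Proof.
move=> x_indep; rewrite det_cm_matrix.
have gram_gt0 := posdefmx_det_gt0 (posdefmx_gram x_indep).
set e : R := (-1) ^+ j.+1; set G := \det _; set c : R := (j`!)%:R.
have e2 : e * e = 1 by rewrite -exprMn mulrNN mulr1 expr1n.
have c_gt0 : 0 < c by rewrite ltr0n fact_gt0.
have -> : e / (2 ^+ j * c ^+ 2) * (e * 2 ^+ j * G) = e * e * (G / c ^+ 2).
  by field; rewrite lt0r_neq0 // expf_neq0 // pnatr_eq0.
by rewrite e2 mul1r divr_gt0 ?exprn_gt0.
Qed.

End CayleyMenger.

Section MovingVertex.
Variables (R : realType) (d n : nat) (x : 'I_n -> 'rV[R]_d) (p : 'I_n).

Lemma upd_vertex_id : upd_vertex x p (x p) = x.
Proof. by apply/funext => s; rewrite /upd_vertex; case: eqP => // ->. Qed.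

Lemma is_diff_upd_vertex s k :
  is_diff (x p) (fun y => upd_vertex x p y s 0 k) (fun v => (s == p)%:R * v 0 k).
Proof.
rewrite /upd_vertex; case: eqP => _.
  by apply: (is_diff_eq (is_diff_coord 0 k (x p))); apply/funext => v; rewrite mul1r.
by apply: (is_diff_eq (is_diff_cst (x s 0 k) _)); apply/funext => v; rewrite mul0r.
Qed.

Lemma is_diff_sqdist_upd s t :
  is_diff (x p) (fun y => sqdist (upd_vertex x p y) s t)
    (fun v => ((s == p)%:R - (t == p)%:R) * ((2 *: (x s - x t)) *m v^T) 0 0).
Proof.
have dterm k := is_diff_sqr (is_diffB (is_diff_upd_vertex s k) (is_diff_upd_vertex t k)).
apply: (is_diff_eq (is_diff_sum (index_enum _) dterm)); apply/funext => v.
rewrite mxE !mulr_sumr; apply: eq_bigr => k _.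
by rewrite !fctE /= upd_vertex_id !mxE; ring.
Qed.

End MovingVertex.

Section CayleyMengerMovingVertex.
Variables (R : realType) (d j : nat) (x : 'I_j.+1 -> 'rV[R]_d) (p : 'I_j.+1).
Local Notation B := (cm_matrix x).

Lemma cofactor_cm_matrixC a b : cofactor B a b = cofactor B b a.
Proof. by rewrite -{1}trmx_cm_matrix cofactor_tr. Qed.

Lemma is_diff_cm_matrix_upd a b :
  is_diff (x p) (fun y => cm_matrix (upd_vertex x p y) a b)
    (fun v => match unlift ord0 a, unlift ord0 b with
              | Some s, Some t =>
                  ((s == p)%:R - (t == p)%:R) * ((2 *: (x s - x t)) *m v^T) 0 0
              | _, _ => 0
              end).
Proof.
rewrite (_ : (fun y => _) = fun y =>
    match unlift ord0 a, unlift ord0 b with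
    | Some s, Some t => sqdist (upd_vertex x p y) s t
    | None, None => 0
    | _, _ => 1
    end); last by apply/funext => y; rewrite mxE.
case: (unlift ord0 a) => [s|]; case: (unlift ord0 b) => [t|];
  by [exact: is_diff_sqdist_upd | exact: is_diff_cst].
Qed.

Lemma is_diff_det_cm_upd :
  is_diff (x p) (fun y => \det (cm_matrix (upd_vertex x p y)))
    (fun v => 2 * \sum_(m | m != p)
                \adj B (lift ord0 p) (lift ord0 m) * ((2 *: (x p - x m)) *m v^T) 0 0).
Proof.
have := is_diff_det is_diff_cm_matrix_upd; rewrite upd_vertex_id => ddet.
apply: (is_diff_eq ddet); apply/funext => v.
rewrite big_ord_recl big1 ?add0r => [|b _]; last by rewrite unlift_none mul0r.
under eq_bigr => s _ do rewrite big_ord_recl liftK unlift_none /= mul0r add0r.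
under eq_bigr => s _ do under eq_bigr => t _ do rewrite !liftK /=.
rewrite big_delta_antisym => [|s t|s t]; last exact: cofactor_cm_matrixC.
- rewrite (bigD1 p) //= subrr scaler0 mul0mx mxE mulr0 add0r.
  by congr (_ * _); apply: eq_bigr => m _; rewrite [\adj B _ _]mxE cofactor_cm_matrixC.
- by rewrite -opprB scalerN mulNmx mxE.
Qed.

End CayleyMengerMovingVertex.

Theorem lemma1 (R : realType) (d j : nat) (x : 'I_j.+1 -> 'rV[R]_d) (p : 'I_j.+1) :
  (1 <= j)%N -> (j <= d)%N -> affinely_independent x ->
  let f := fun y : 'rV[R]_d => gamma_cdf (upd_vertex x p y) in
  let grad : 'rV[R]_d :=
    ((-1) ^+ j.+1 / 2 ^+ j) / gamma_cdf x *:
      \sum_(m < j.+1 | m != p)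
        (\adj (cm_matrix x) (lift ord0 p) (lift ord0 m) *: (2 *: (x p - x m))) in
  differentiable f (x p) /\
  forall v : 'rV[R]_d, 'd f (x p) v = \sum_(k < d) v 0 k * grad 0 k.
Proof.
move=> _ _ x_indep f grad.
set c : R := (j`!)%:R; set kap : R := (-1) ^+ j.+1 / (2 ^+ j * c ^+ 2).
have kdet_gt0 : 0 < kap * \det (cm_matrix x) := cm_content_sqr_gt0 x_indep.
pose detB y := \det (cm_matrix (upd_vertex x p y)).
have kdetB_gt0 : 0 < (kap *: detB) (x p) by rewrite fctE /detB upd_vertex_id.
have df := is_diffZ c (is_diff_sqrt (is_diffZ kap (is_diff_det_cm_upd x p)) kdetB_gt0).
rewrite (_ : f = c *: fun y => Num.sqrt ((kap *: detB) y)) //.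
split=> [|v]; first exact: ex_diff.
rewrite diff_val !fctE /detB upd_vertex_id.
have -> : \sum_k v 0 k * grad 0 k = (grad *m v^T) 0 0.
  by rewrite mxE; apply: eq_bigr => k _; rewrite [v^T _ _]mxE mulrC.
rewrite /grad -scalemxAl mulmx_suml !mxE summxE.
under [in RHS]eq_bigr => m _ do rewrite -scalemxAl mxE.
rewrite /gamma_cdf /Defs.content -/c -/kap.
set S := \sum_(_ | _) _; set q := Num.sqrt _.
have q_gt0 : 0 < q by rewrite sqrtr_gt0.
rewrite /GRing.scale /= /kap; field.
by rewrite lt0r_neq0 // pnatr_eq0 -lt0n fact_gt0 expf_neq0 // pnatr_eq0.
Qed.
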